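(* In $X=(\mathbb{R}^2,\|\cdot\|_\infty)$ let $A=\{(x,y):x>0,\ y\ge 1/x\}$ and $B=\{(x,y):x>-1,\ y\le \frac{1}{x+1}-1\}$. Then $\mathrm{dist}(A,B)=1$, the ordered pair $(A,B)$ has the $BUC$ property, and $(A,B)$ does not have the $UC$ property.
   Context: $\|(x,y)\|_\infty=\max\{|x|,|y|\}$; $\mathrm{dist}(A,B)=\inf\{\|a-b\|_\infty:a\in A,b\in B\}$. The ordered pair $(A,B)$ has the $UC$ property if for all sequences $\{x_n\},\{z_n\}\subset A$, $\{y_n\}\subset B$ with $\lim_n\|x_n-y_n\|=\lim_n\|z_n-y_n\|=\mathrm{dist}(A,B)$ one has $\lim_n\|x_n-z_n\|=0$. It has the bounded $UC$ property ($BUC$) if the same implication holds whenever in addition $\{x_n\}$ and $\{z_n\}$ are bounded. *)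

From Stdlib Require Import Reals.
Open Scope R_scope.

Definition ninf (p : R * R) : R := Rmax (Rabs (fst p)) (Rabs (snd p)).
Definition dinf (p q : R * R) : R := ninf (fst p - fst q, snd p - snd q).

Definition is_dist (A B : R * R -> Prop) (d : R) : Prop :=
  (forall a b, A a -> B b -> d <= dinf a b) /\
  (forall m, (forall a b, A a -> B b -> m <= dinf a b) -> m <= d).

Definition bounded_seq (x : nat -> R * R) : Prop :=
  exists M, forall n, ninf (x n) <= M.

Definition UC (A B : R * R -> Prop) : Prop :=
  forall d, is_dist A B d ->
  forall x z y : nat -> R * R,
    (forall n, A (x n)) -> (forall n, A (z n)) -> (forall n, B (y n)) ->
    Un_cv (fun n => dinf (x n) (y n)) d ->
    Un_cv (fun n => dinf (z n) (y n)) d ->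
    Un_cv (fun n => dinf (x n) (z n)) 0.

Definition BUC (A B : R * R -> Prop) : Prop :=
  forall d, is_dist A B d ->
  forall x z y : nat -> R * R,
    (forall n, A (x n)) -> (forall n, A (z n)) -> (forall n, B (y n)) ->
    bounded_seq x -> bounded_seq z ->
    Un_cv (fun n => dinf (x n) (y n)) d ->
    Un_cv (fun n => dinf (z n) (y n)) d ->
    Un_cv (fun n => dinf (x n) (z n)) 0.

Definition setA : R * R -> Prop := fun p => 0 < fst p /\ snd p >= 1 / fst p.
Definition setB : R * R -> Prop :=
  fun p => -1 < fst p /\ snd p <= 1 / (fst p + 1) - 1.

(* Write A for setA and B for setB.  Shifting B by (1,1) turns both sets into
   "hyperbola regions": (x,y) is in A iff x > 0 and x*y >= 1, and (u,v) is in
   B iff s = u+1 > 0 and s*t <= 1 with t = v+1.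

   1. dist(A,B) = 1: a point of B is within sup-distance < 1 of a point of A
      only if its shift (s,t) dominates that point strictly, i.e. s*t > x*y,
      which is impossible; the pair (1,1), (0,0) attains the value 1.
   2. BUC: the elementary estimate [hyperbola_gap] shows that if (x1,y1) lies
      in A with x1 <= M and b in B is at distance <= 1 + d from it, then every
      point of the vertical strip "x - u <= 1 + d" satisfies x <= x1 + K d with
      K = 1 + 2 M^2.  Applied to both points and both coordinates, this gives
      a uniform modulus [bounded_uc_modulus], from which BUC follows.
   3. not UC: along the hyperbola, (t,1/t) and (t-1/2,2/t) in A and
      (t-1,1/t-1) in B have distances 1 and 1 + 1/t, while the two points of A
      stay 1/2 apart; letting t = n+1 go to infinity contradicts UC. *)

From Stdlib Require Import Reals Lra Lia.
Open Scope R_scope.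

Lemma abs_le_between (r c : R) : Rabs r <= c -> - c <= r <= c.
Proof. unfold Rabs; destruct Rcase_abs; lra. Qed.

Lemma coords_le_dinf (a b : R * R) :
  Rabs (fst a - fst b) <= dinf a b /\ Rabs (snd a - snd b) <= dinf a b.
Proof. unfold dinf, ninf; simpl; split; [apply Rmax_l | apply Rmax_r]. Qed.

Lemma dinf_ge0 (a b : R * R) : 0 <= dinf a b.
Proof. eapply Rle_trans; [apply Rabs_pos | apply coords_le_dinf]. Qed.

Lemma dinf_le_iff (a b : R * R) (c : R) :
  dinf a b <= c <->
  (- c <= fst a - fst b <= c /\ - c <= snd a - snd b <= c).
Proof.
  split.
  - intro H; destruct (coords_le_dinf a b) as [H1 H2].
    split; apply abs_le_between; lra.
  - intros [H1 H2]; unfold dinf, ninf; simpl.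
    apply Rmax_lub; apply Rabs_le; exact H1 || exact H2.
Qed.

Lemma dinf_of_dominated (a b : R * R) :
  0 <= fst a - fst b -> 0 <= snd a - snd b ->
  dinf a b = Rmax (fst a - fst b) (snd a - snd b).
Proof.
  intros H1 H2; unfold dinf, ninf; simpl.
  rewrite (Rabs_pos_eq _ H1), (Rabs_pos_eq _ H2); reflexivity.
Qed.

Lemma coords_le_ninf (p : R * R) (M : R) :
  ninf p <= M -> fst p <= M /\ snd p <= M.
Proof.
  unfold ninf; intro H; split; eapply Rle_trans; try apply Rle_abs;
    eapply Rle_trans; [apply Rmax_l | exact H | apply Rmax_r | exact H].
Qed.

Lemma setA_spec (p : R * R) : setA p <-> 0 < fst p /\ 1 <= fst p * snd p.
Proof.
  destruct p as [x y]; unfold setA; simpl; split; intros [hx h]; split; auto.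
  - apply Rge_le in h; apply (Rmult_le_compat_l x) in h; [|lra].
    replace (x * (1 / x)) with 1 in h by (field; lra); exact h.
  - apply Rle_ge; unfold Rdiv; rewrite Rmult_1_l.
    apply (Rmult_le_reg_l x); [exact hx|]. rewrite Rinv_r; lra.
Qed.

Lemma setB_spec (p : R * R) :
  setB p <-> 0 < fst p + 1 /\ (fst p + 1) * (snd p + 1) <= 1.
Proof.
  destruct p as [u v]; unfold setB; simpl; split; intros [hu h]; split; try lra.
  - apply (Rplus_le_compat_r 1), (Rmult_le_compat_l (u + 1)) in h; [|lra].
    replace ((u + 1) * (1 / (u + 1) - 1 + 1)) with 1 in h by (field; lra).
    exact h.
  - cut (v + 1 <= 1 / (u + 1)); [lra|].
    unfold Rdiv; rewrite Rmult_1_l.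
    apply (Rmult_le_reg_l (u + 1)); [lra|]. rewrite Rinv_r; lra.
Qed.

Lemma is_dist_unique (A B : R * R -> Prop) (d d' : R) :
  is_dist A B d -> is_dist A B d' -> d = d'.
Proof.
  intros [low_d great_d] [low_d' great_d'].
  apply Rle_antisym; [apply great_d' | apply great_d]; assumption.
Qed.

(* Points of A and B are at sup distance at least 1: otherwise the shifted
   point of B would strictly dominate the point of A coordinatewise. *)
Lemma setA_setB_far (a b : R * R) : setA a -> setB b -> 1 <= dinf a b.
Proof.
  destruct a as [x y], b as [u v].
  intros [hx hxy]%setA_spec [hu huv]%setB_spec; simpl in *.
  destruct (Rle_lt_dec 1 (dinf (x, y) (u, v))) as [far | near]; [exact far|].
  exfalso; destruct (coords_le_dinf (x, y) (u, v)) as [h1 h2]; simpl in *.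
  pose proof (Rle_abs (x - u)); pose proof (Rle_abs (y - v)).
  assert (hs : x < u + 1) by lra. assert (ht : y < v + 1) by lra.
  assert (hy : 0 < y) by nra.
  nra.
Qed.

Lemma dist_setA_setB : is_dist setA setB 1.
Proof.
  split.
  - exact setA_setB_far.
  - intros m low.
    replace 1 with (dinf (1, 1) (0, 0)).
    + apply low; [apply setA_spec | apply setB_spec]; simpl; lra.
    + rewrite dinf_of_dominated; simpl; try lra.
      rewrite Rminus_0_r; apply Rmax_left; lra.
Qed.

(* The core estimate.  (p,q) lies above the hyperbola with p <= M, and the
   shifted point (s,t) = (u+1, v+1) lies below it, within height 1 + d of
   (p,q).  Then any abscissa r with r - u <= 1 + d exceeds p by at most
   (1 + 2 M^2) d: indeed t >= q - d >= 1/(2M) and t (r - p - d) <= p d. *)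
Lemma hyperbola_gap (p q r u v M d : R) :
  0 < p -> 1 <= p * q -> p <= M -> (u + 1) * (v + 1) <= 1 ->
  q - v <= 1 + d -> r - u <= 1 + d -> 0 <= d -> 2 * M * d <= 1 ->
  r - p <= (1 + 2 * M * M) * d.
Proof.
  intros hp hpq hpM hst hq hr hd hMd.
  set (s := u + 1) in *; set (t := v + 1) in *.
  assert (hq0 : 0 < q) by nra.
  assert (hMq : 1 <= M * q) by nra.
  assert (ht : 1 <= 2 * M * t) by (unfold t in *; nra).
  assert (ht0 : 0 < t) by nra.
  assert (hrt : t * r <= 1 + t * d) by (unfold s, t in *; nra).
  assert (hpt : 1 - p * d <= t * p) by (unfold t in *; nra).
  assert (gap : t * (r - p - d) <= p * d) by nra.
  destruct (Rle_lt_dec (r - p - d) 0); [nra|].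
  assert (r - p - d <= 2 * M * t * (r - p - d)) by nra.
  nra.
Qed.

Lemma near_points_close (a1 a2 b : R * R) (M d : R) :
  setA a1 -> setA a2 -> setB b -> ninf a1 <= M -> ninf a2 <= M ->
  0 <= d -> 2 * M * d <= 1 ->
  dinf a1 b <= 1 + d -> dinf a2 b <= 1 + d ->
  dinf a1 a2 <= (1 + 2 * M * M) * d.
Proof.
  destruct a1 as [x1 y1], a2 as [x2 y2], b as [u v].
  intros [hx1 h1]%setA_spec [hx2 h2]%setA_spec [_ hB]%setB_spec
    [hxM1 hyM1]%coords_le_ninf [hxM2 hyM2]%coords_le_ninf hd hMd
    d1%dinf_le_iff d2%dinf_le_iff; simpl in *.
  assert (hy1 : 0 < y1) by nra. assert (hy2 : 0 < y2) by nra.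
  apply dinf_le_iff; simpl; split; split.
  - cut (x2 - x1 <= (1 + 2 * M * M) * d); [lra|].
    apply (hyperbola_gap x1 y1 x2 u v M d); lra.
  - apply (hyperbola_gap x2 y2 x1 u v M d); lra.
  - cut (y2 - y1 <= (1 + 2 * M * M) * d); [lra|].
    apply (hyperbola_gap y1 x1 y2 v u M d); nra.
  - apply (hyperbola_gap y2 x2 y1 v u M d); nra.
Qed.

Lemma bounded_uc_modulus (M eps : R) :
  1 <= M -> 0 < eps ->
  exists d, 0 < d /\
    forall a1 a2 b, setA a1 -> setA a2 -> setB b ->
      ninf a1 <= M -> ninf a2 <= M ->
      dinf a1 b <= 1 + d -> dinf a2 b <= 1 + d -> dinf a1 a2 < eps.
Proof.
  intros hM heps.
  set (K := 1 + 2 * M * M).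
  assert (hK : 0 < K) by (unfold K; nra).
  set (d := Rmin (/ (2 * M)) (eps / (2 * K))).
  assert (hd : 0 < d).
  { apply Rmin_glb_lt; [apply Rinv_0_lt_compat | apply Rdiv_lt_0_compat]; lra. }
  assert (hMd : 2 * M * d <= 1).
  { replace 1 with (2 * M * / (2 * M)) by (field; lra).
    apply Rmult_le_compat_l; [lra | apply Rmin_l]. }
  assert (hKd : K * d <= eps / 2).
  { replace (eps / 2) with (K * (eps / (2 * K))) by (field; lra).
    apply Rmult_le_compat_l; [lra | apply Rmin_r]. }
  exists d; split; [exact hd|].
  intros a1 a2 b hA1 hA2 hB hM1 hM2 d1 d2.
  eapply Rle_lt_trans; [apply (near_points_close a1 a2 b M d)|]; auto.
  all: fold K; lra.
Qed.

Lemma setA_setB_BUC : BUC setA setB.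
Proof.
  intros d0 hd0 x z y hx hz hy [M1 hM1] [M2 hM2] cvx cvz.
  rewrite (is_dist_unique _ _ _ _ hd0 dist_setA_setB) in cvx, cvz.
  set (M := Rmax 1 (Rmax M1 M2)).
  assert (hMx : forall n, ninf (x n) <= M).
  { intro n; eapply Rle_trans; [apply hM1|].
    eapply Rle_trans; [apply Rmax_l | apply Rmax_r]. }
  assert (hMz : forall n, ninf (z n) <= M).
  { intro n; eapply Rle_trans; [apply hM2|].
    eapply Rle_trans; [apply Rmax_r | apply Rmax_r]. }
  intros eps heps.
  destruct (bounded_uc_modulus M eps (Rmax_l _ _) heps) as [d [hd close]].
  destruct (cvx d hd) as [N1 hN1], (cvz d hd) as [N2 hN2].
  exists (max N1 N2); intros n hn; unfold R_dist in *.
  specialize (hN1 n ltac:(lia)); specialize (hN2 n ltac:(lia)).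
  rewrite Rminus_0_r, Rabs_pos_eq by apply dinf_ge0.
  apply Rabs_def2 in hN1, hN2.
  apply (close _ _ (y n)); auto; lra.
Qed.

(* Points escaping to infinity along the hyperbola: two points of A at
   distance 1/2 from each other and a point of B at distances 1 and 1 + 1/t. *)
Definition onA (t : R) : R * R := (t, 1 / t).
Definition offA (t : R) : R * R := (t - 1 / 2, 2 / t).
Definition onB (t : R) : R * R := (t - 1, 1 / t - 1).

Lemma escaping_points_in_sets (t : R) :
  1 <= t -> setA (onA t) /\ setA (offA t) /\ setB (onB t).
Proof.
  intro ht; unfold onA, offA, onB.
  assert (hinv : 1 / t <= 1).
  { unfold Rdiv; rewrite Rmult_1_l, <- Rinv_1. apply Rinv_le_contravar; lra. }
  split; [|split]; [apply setA_spec | apply setA_spec | apply setB_spec]; simpl.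
  - split; [lra | right; field; lra].
  - replace ((t - 1 / 2) * (2 / t)) with (2 - 1 / t) by (field; lra); lra.
  - replace (t - 1 + 1) with t by ring; split; [lra | right; field; lra].
Qed.

Lemma escaping_points_distances (t : R) :
  1 <= t ->
  dinf (onA t) (onB t) = 1 /\ dinf (offA t) (onB t) = 1 + 1 / t /\
  1 / 2 <= dinf (onA t) (offA t).
Proof.
  intro ht; unfold onA, offA, onB.
  assert (hinv : 0 < 1 / t) by (apply Rdiv_lt_0_compat; lra).
  split; [|split].
  - rewrite dinf_of_dominated; simpl; try lra.
    replace (t - (t - 1)) with 1 by ring.
    replace (1 / t - (1 / t - 1)) with 1 by ring. apply Rmax_left; lra.
  - rewrite dinf_of_dominated; simpl; replace (2 / t - (1 / t - 1))
      with (1 + 1 / t) by (field; lra); try lra.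
    apply Rmax_right; lra.
  - eapply Rle_trans; [|apply (proj1 (coords_le_dinf _ _))]; simpl.
    replace (t - (t - 1 / 2)) with (1 / 2) by field.
    rewrite Rabs_pos_eq; lra.
Qed.

Lemma inv_shifted_naturals_cv : Un_cv (fun n => 1 / (INR n + 1)) 0.
Proof.
  apply (Un_cv_ext (fun n => / (INR n + 1))); [intro n; unfold Rdiv; ring|].
  apply cv_infty_cv_0; intro M.
  destruct (INR_archimed 1 M) as [k hk]; [lra|].
  exists k; intros n hn.
  apply le_INR in hn; lra.
Qed.

Lemma setA_setB_not_UC : ~ UC setA setB.
Proof.
  intro uc.
  set (t := fun n => INR n + 1).
  assert (ht : forall n, 1 <= t n) by (intro n; pose proof (pos_INR n); unfold t; lra).
  assert (cv_xz : Un_cv (fun n => dinf (onA (t n)) (offA (t n))) 0).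
  { apply (uc 1 dist_setA_setB _ _ (fun n => onB (t n)));
      try (intro n; apply (escaping_points_in_sets _ (ht n))).
    - intros eps heps; exists 0%nat; intros n _; unfold R_dist.
      rewrite (proj1 (escaping_points_distances _ (ht n))), Rminus_diag, Rabs_R0.
      exact heps.
    - intros eps heps.
      destruct (inv_shifted_naturals_cv eps heps) as [k hk].
      exists k; intros n hn; specialize (hk n hn); unfold R_dist in *.
      rewrite (proj1 (proj2 (escaping_points_distances _ (ht n)))).
      replace (1 + 1 / t n - 1) with (1 / (INR n + 1) - 0) by (unfold t; ring).
      exact hk. }
  destruct (cv_xz (1 / 2) ltac:(lra)) as [k hk].
  specialize (hk k (le_n k)); unfold R_dist in hk.
  rewrite Rminus_0_r, Rabs_pos_eq in hk by apply dinf_ge0.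
  pose proof (proj2 (proj2 (escaping_points_distances _ (ht k)))); lra.
Qed.

Theorem mainTheorem16 :
  is_dist setA setB 1 /\ BUC setA setB /\ ~ UC setA setB.
Proof.
  split; [exact dist_setA_setB|].
  split; [exact setA_setB_BUC | exact setA_setB_not_UC].
Qed.
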